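(* Let $R$ be a discrete valuation ring of characteristic $p>0$ with field of fractions $K$. Let $H$ be a primitively generated $K$-Hopf algebra of rank $p^n$, let $t_1,\dots,t_n$ be a $K$-basis of $\mathrm{Prim}(H)$, and suppose the associated matrix $B=(b_{j,i})$ (defined by $t_i^p=\sum_j b_{j,i}t_j$) lies in $M_n(R)$. Let $A=(a_{j,i})\in M_n(R)$ and suppose there exists $\Theta=(\theta_{j,i})\in\mathrm{GL}_n(K)$ with $\Theta A=B\Theta^{(p)}$, where $\Theta^{(p)}=(\theta_{j,i}^p)$. Let \[H_0=R[u_1,\dots,u_n]\big/\Big(u_i^p-\sum_{j=1}^n a_{j,i}u_j : 1\le i\le n\Big),\qquad \Delta(u_i)=u_i\otimes 1+1\otimes u_i.\] Then $H_0$ can be embedded in $H$ as an $R$-Hopf order. Furthermore: (1) $H_0$ embeds in $H$ via $\Theta$, i.e. via $u_i\mapsto\sum_j\theta_{j,i}t_j$, so that its image is \[R\Big[\Big\{\sum_{j=1}^n\theta_{j,i}t_j : 1\le i\le n\Big\}\Big]\subseteq H;\] (2) if $A,A'\in M_n(R)$ and $\Theta,\Theta'\in\mathrm{GL}_n(K)$ satisfy $\Theta A=B\Theta^{(p)}$ and $\Theta'A'=B\Theta'^{(p)}$, and $H_0,H_0'$ denote the corresponding Hopf orders in $H$ obtained via the embeddings $\Theta,\Theta'$ as in (1), then $H_0=H_0'$ if and only if $\Theta^{-1}\Theta'\in \mathrm{GL}_n(R)$.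
   Context: All Hopf algebras are commutative, cocommutative, finitely generated projective, of $p$-power rank. $t$ is primitive if $\Delta(t)=t\otimes1+1\otimes t$; $\mathrm{Prim}(H)$ is the module of primitives; $H$ is primitively generated if generated as an algebra by its primitives. An $R$-Hopf order in a $K$-Hopf algebra $H$ is a finitely generated projective $R$-submodule $H_0\subseteq H$ which is an $R$-Hopf algebra under the operations inherited from $H$ with $KH_0=H$. *)

From HB Require Import structures.
From mathcomp Require Import all_boot all_order all_algebra all_field.
From mathcomp Require Import mpoly.
Set Implicit Arguments. Unset Strict Implicit. Unset Printing Implicit Defensive.
Import Order.TTheory GRing.Theory Num.Theory.
Local Open Scope ring_scope.

Definition is_dvr (K : fieldType) (R : K -> Prop) : Prop :=
  exists v : K -> int,
    [/\ (forall x y, x != 0 -> y != 0 -> v (x * y) = v x + v y),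
        (forall x y, x != 0 -> y != 0 -> x + y != 0 ->
            (v x <= v (x + y)) || (v y <= v (x + y))),
        (exists pi : K, pi != 0 /\ v pi = 1)
      & (forall x, R x <-> (x = 0 \/ 0 <= v x))].

Definition in_GLR (K : fieldType) (R : K -> Prop) (n : nat) (M : 'M[K]_n) :=
  [/\ M \in unitmx, (forall i j, R (M i j)) & (forall i j, R (invmx M i j))].

Definition frob_mx (K : fieldType) (p n : nat) (M : 'M[K]_n) : 'M[K]_n :=
  map_mx (fun x => x ^+ p) M.

Section HopfDefs.
Variables (K : fieldType) (H : falgType K).

(* H (x)_K H is represented by 'M_d (d = dim_K H) through coordinates in the
   canonical basis vbasis {:H} = (hbas i)_i of H : the element
   sum_ij M i j hbas i (x) hbas j is the matrix M, so x (x) y is the matrix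
   of products of coordinates. *)
Definition hbas (i : 'I_(\dim {:H})) : H := tnth (vbasis {:H}) i.
Definition tens (x y : H) : 'M[K]_(\dim {:H}) :=
  \matrix_(i, j) (coord (vbasis {:H}) i x * coord (vbasis {:H}) j y).
(* Multiplication of H (x) H : (a (x) b)(c (x) d) = ac (x) bd. *)
Definition tmul (M N : 'M[K]_(\dim {:H})) : 'M[K]_(\dim {:H}) :=
  \sum_(i < \dim {:H}) \sum_(j < \dim {:H})
   \sum_(k < \dim {:H}) \sum_(l < \dim {:H})
     (M i j * N k l) *: tens (hbas i * hbas k) (hbas j * hbas l).

Record hopf_data := HopfData {
  comul : H -> 'M[K]_(\dim {:H});
  counit : H -> K;
  antipode : H -> H }.

(* Commutative, cocommutative K-Hopf algebra structure on the finite
   dimensional K-algebra H (finitely generated projective is automatic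
   over the field K). *)
Definition is_cc_hopf (D : hopf_data) : Prop :=
  (forall x y : H, x * y = y * x) /\
  (forall (a : K) (x y : H), comul D (a *: x + y) = a *: comul D x + comul D y) /\
  (forall (a : K) (x y : H), counit D (a *: x + y) = a * counit D x + counit D y) /\
  (forall (a : K) (x y : H), antipode D (a *: x + y) = a *: antipode D x + antipode D y) /\
  comul D 1 = tens 1 1 /\
  (forall x y, comul D (x * y) = tmul (comul D x) (comul D y)) /\
  counit D 1 = 1 /\
  (forall x y, counit D (x * y) = counit D x * counit D y) /\
  (* coassociativity, in coordinates of H (x) H (x) H *)
  (forall x i j k, (\sum_a comul D x a k * comul D (hbas a) i j)
                 = (\sum_b comul D x i b * comul D (hbas b) j k)) /\
  (* counit axioms *)
  (forall x, (\sum_a \sum_b (comul D x a b * counit D (hbas a)) *: hbas b) = x) /\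
  (forall x, (\sum_a \sum_b (comul D x a b * counit D (hbas b)) *: hbas a) = x) /\
  (* antipode axioms *)
  (forall x, (\sum_a \sum_b comul D x a b *: (antipode D (hbas a) * hbas b))
             = counit D x *: 1) /\
  (forall x, (\sum_a \sum_b comul D x a b *: (hbas a * antipode D (hbas b)))
             = counit D x *: 1) /\
  (forall x, (comul D x)^T = comul D x).

Definition primitive (D : hopf_data) (x : H) : Prop :=
  comul D x = tens x 1 + tens 1 x.

Definition prim_generated (D : hopf_data) : Prop :=
  forall P : H -> Prop,
    (forall x, primitive D x -> P x) -> P 1 ->
    (forall x y, P x -> P y -> P (x + y)) ->
    (forall (a : K) x, P x -> P (a *: x)) ->
    (forall x y, P x -> P y -> P (x * y)) ->
    forall x, P x.

Definition prim_basis (D : hopf_data) (n : nat) (t : 'I_n -> H) : Prop :=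
  [/\ (forall i, primitive D (t i)),
      (forall c : 'I_n -> K, \sum_i c i *: t i = 0 -> forall i, c i = 0)
    & (forall x, primitive D x -> exists c : 'I_n -> K, x = \sum_i c i *: t i)].

Definition Rgen (R : K -> Prop) (n : nat) (s : 'I_n -> H) : H -> Prop :=
  fun x => forall P : H -> Prop,
    (forall i, P (s i)) -> P 1 ->
    (forall y z, P y -> P z -> P (y + z)) ->
    (forall (r : K) y, R r -> P y -> P (r *: y)) ->
    (forall y z, P y -> P z -> P (y * z)) ->
    P x.

Definition R_submodule (R : K -> Prop) (H0 : H -> Prop) : Prop :=
  [/\ H0 0, (forall x y, H0 x -> H0 y -> H0 (x + y))
    & (forall r x, R r -> H0 x -> H0 (r *: x))].

(* H0 is a finitely generated projective R-module: a surjection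
   R^m ->> H0, g, admitting an R-linear section sigma. *)
Definition fg_projective (R : K -> Prop) (H0 : H -> Prop) : Prop :=
  exists (m : nat) (g : 'I_m -> H) (sigma : H -> 'rV[K]_m),
    [/\ (forall i, H0 (g i)),
        (forall x, H0 x -> forall i, R (sigma x 0 i)),
        (forall x y, H0 x -> H0 y -> sigma (x + y) = sigma x + sigma y),
        (forall r x, R r -> H0 x -> sigma (r *: x) = r *: sigma x)
      & (forall x, H0 x -> x = \sum_i sigma x 0 i *: g i)].

(* An R-Hopf order in H. H0 (x)_R H0 is identified (H0 being projective)
   with the R-span of the x (x) y, x, y in H0, inside H (x)_K H. *)
Definition hopf_order (R : K -> Prop) (D : hopf_data) (H0 : H -> Prop) : Prop :=
  R_submodule R H0 /\ fg_projective R H0 /\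
  (forall x, exists (m : nat) (c : 'I_m -> K) (h : 'I_m -> H),
      (forall i, H0 (h i)) /\ x = \sum_i c i *: h i) /\
  H0 1 /\ (forall x y, H0 x -> H0 y -> H0 (x * y)) /\
  (forall x, H0 x -> exists (m : nat) (y z : 'I_m -> H),
      (forall i, H0 (y i) /\ H0 (z i)) /\ comul D x = \sum_i tens (y i) (z i)) /\
  (forall x, H0 x -> R (counit D x)) /\
  (forall x, H0 x -> H0 (antipode D x)).

End HopfDefs.

Definition theta_emb (K : fieldType) (H : falgType K) (n : nat)
    (t : 'I_n -> H) (Th : 'M[K]_n) : 'I_n -> H :=
  fun i => \sum_j Th j i *: t j.

Definition rel_poly (K : fieldType) (p n : nat) (A : 'M[K]_n) (i : 'I_n)
    : {mpoly K[n]} :=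
  'X_i ^+ p - \sum_j A j i *: 'X_j.

Definition eval_at (K : fieldType) (H : falgType K) (n : nat)
    (s : 'I_n -> H) (q : {mpoly K[n]}) : H :=
  mmap (fun c : K => c%:A) s q.

Definition R_poly (K : fieldType) (R : K -> Prop) (n : nat) (q : {mpoly K[n]}) :=
  forall m, R (q@_m).

(* Put s_i = sum_j theta_{j,i} t_j.  As H is commutative of characteristic p,
   x |-> x^p is additive on H, so Theta A = B Theta^(p) says exactly that
   s_i^p = sum_j a_{j,i} s_j; the s_i are primitive and, Theta being invertible,
   generate H.  Rewriting u_i^p by the relations lowers the degree, so the p^n
   monomials s^e with all e_i < p span H, hence form a K-basis, and R[s] is their
   R-span because A is integral; the same reduction in R[u] shows that the kernel of
   u |-> s is generated by the relations.  R[s] is stable under the comultiplication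
   (the s_i are primitive) and the counit, and the antipode is the algebra
   automorphism s_i |-> -s_i, which multiplies each basis monomial by a sign.
   Comparing coordinates of the generators in the monomial basis, R[s(Theta)] =
   R[s(Theta')] exactly when Theta^-1 Theta' and its inverse are integral. *)

From HB Require Import structures.
From mathcomp Require Import all_boot all_order all_algebra all_field.
From mathcomp Require Import mpoly zify.
Set Implicit Arguments. Unset Strict Implicit. Unset Printing Implicit Defensive.
Import GRing.Theory.
Local Open Scope ring_scope.

Section ValuationRing.
Variables (K : fieldType) (R : K -> Prop).
Hypothesis dvr : is_dvr R.

Lemma dvr0 : R 0.
Proof. by case: dvr => v [_ _ _ memR]; apply/memR; left. Qed.

Lemma dvrM x y : R x -> R y -> R (x * y).
Proof.
case: dvr => v [vM _ _ memR] /memR[-> | vx] /memR[-> | vy];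
  rewrite ?mul0r ?mulr0; try exact: dvr0.
have [-> | x0] := eqVneq x 0; first by rewrite mul0r; exact: dvr0.
have [-> | y0] := eqVneq y 0; first by rewrite mulr0; exact: dvr0.
by apply/memR; right; rewrite vM // Num.Theory.addr_ge0.
Qed.

Lemma dvr_units : R 1 /\ R (-1).
Proof.
case: dvr => v [vM _ _ memR].
have n1 : (1 : K) != 0 := oner_neq0 K.
have nN1 : (-1 : K) != 0 by rewrite oppr_eq0.
have v1 : v 1 = 0 by apply: (@addrI _ (v 1)); rewrite addr0 -vM ?mulr1.
have vN1 : v (-1) + v (-1) = 0 by rewrite -vM ?mulrNN ?mulr1.
by split; apply/memR; right; [rewrite v1 | lia].
Qed.

Lemma dvr1 : R 1. Proof. exact: dvr_units.1. Qed.

Lemma dvrN1 : R (-1). Proof. exact: dvr_units.2. Qed.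

Lemma dvrX x k : R x -> R (x ^+ k).
Proof.
by move=> Rx; elim: k => [|k IHk]; rewrite ?expr0 ?exprS; [exact: dvr1 | exact: dvrM].
Qed.

Lemma dvrD x y : R x -> R y -> R (x + y).
Proof.
case: dvr => v [_ vD _ memR] Rx Ry.
have [-> | x0] := eqVneq x 0; first by rewrite add0r.
have [-> | y0] := eqVneq y 0; first by rewrite addr0.
have [-> | xy0] := eqVneq (x + y) 0; first exact: dvr0.
case/memR: Rx => [/eqP | vx]; first by rewrite (negbTE x0).
case/memR: Ry => [/eqP | vy]; first by rewrite (negbTE y0).
apply/memR; right; case/orP: (vD x y x0 y0 xy0); exact: Order.POrderTheory.le_trans.
Qed.

Lemma dvr_sum (I : Type) (r : seq I) (P : pred I) (F : I -> K) :
  (forall i, P i -> R (F i)) -> R (\sum_(i <- r | P i) F i).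
Proof. by move=> RF; elim/big_ind: _ => //; [exact: dvr0 | exact: dvrD]. Qed.

End ValuationRing.

Section SmallMonomials.
Variables (p n : nat).
Hypothesis p_gt1 : (1 < p)%N.
Local Notation N := #|{ffun 'I_n -> 'I_p}|.

Definition small_mnm (k : 'I_N) : 'X_{1..n} := [multinom (enum_val k i : nat) | i < n].

Lemma card_small_mnm : N = (p ^ n)%N.
Proof. by rewrite card_ffun !card_ord. Qed.

Lemma small_mnm_inj : injective small_mnm.
Proof.
move=> k l klE; apply: enum_val_inj; apply/ffunP => i; apply: val_inj.
by have := congr1 (fun m : 'X_{1..n} => m i) klE; rewrite /= !mnmE.
Qed.

Lemma small_mnmP (m : 'X_{1..n}) : (forall i, m i < p)%N -> exists k, m = small_mnm k.
Proof.
move=> mp; exists (enum_rank [ffun i => Ordinal (mp i)]).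
by apply/mnmP => i; rewrite mnmE enum_rankK ffunE.
Qed.

Definition mnm_reduce (m : 'X_{1..n}) (i j : 'I_n) := (m - U_(i) *+ p + U_(j))%MM.

Lemma mnm_reduceK (m : 'X_{1..n}) i :
  (p <= m i)%N -> (m - U_(i) *+ p + U_(i) *+ p)%MM = m.
Proof.
move=> pm; apply: submK; apply/mnm_lepP => k; rewrite mulmnE mnm1E.
by case: eqP => [<- | _]; rewrite ?mul1n ?mul0n.
Qed.

Lemma mdeg_mnm_reduce (m : 'X_{1..n}) i j :
  (p <= m i)%N -> (mdeg (mnm_reduce m i j) < mdeg m)%N.
Proof.
move=> pm; rewrite -[X in (_ < mdeg X)%N](mnm_reduceK pm) /mnm_reduce !mdegD.
by rewrite mdegMn !mdeg1 mul1n ltn_add2l.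
Qed.

Lemma small_mnm_ind (P : 'X_{1..n} -> Prop) :
  (forall k, P (small_mnm k)) ->
  (forall (m : 'X_{1..n}) i, (p <= m i)%N -> (forall j, P (mnm_reduce m i j)) -> P m) ->
  forall m, P m.
Proof.
move=> Psmall Pred m; elim: {m}(mdeg m) {-2}m (leqnn (mdeg m)) => [|d IHd] m dm.
  have [|k ->] // := @small_mnmP m => i.
  by move: dm; rewrite leqn0 mdeg_eq0 => /eqP ->; rewrite mnm0E ltnW.
have [/forallP mp | ] := boolP [forall i, m i < p]%N.
  by have [k ->] := small_mnmP mp.
rewrite negb_forall => /existsP[i]; rewrite -leqNgt => pm.
apply: (Pred m i pm) => j; apply: IHd; rewrite -ltnS.
exact: leq_trans (mdeg_mnm_reduce j pm) dm.
Qed.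

End SmallMonomials.

Definition subsemiring (K : fieldType) (Q : K -> Prop) :=
  [/\ Q 0, Q 1, (forall x y, Q x -> Q y -> Q (x + y))
    & (forall x y, Q x -> Q y -> Q (x * y))].

Lemma dvr_subsemiring (K : fieldType) (R : K -> Prop) : is_dvr R -> subsemiring R.
Proof. by move=> dvr; split; [exact: dvr0 | exact: dvr1 | exact: dvrD | exact: dvrM]. Qed.

Section Relations.
Variables (K : fieldType) (p n : nat) (A : 'M[K]_n).
Hypothesis p_gt1 : (1 < p)%N.
Local Notation N := #|{ffun 'I_n -> 'I_p}|.

Lemma mpolyX_reduce (m : 'X_{1..n}) i : (p <= m i)%N ->
  'X_[m] = 'X_[m - U_(i) *+ p] * rel_poly p A i
           + \sum_j A j i *: 'X_[mnm_reduce p m i j] :> {mpoly K[n]}.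
Proof.
move=> pm; rewrite -{1}(mnm_reduceK pm) mpolyXD -mpolyXn /rel_poly mulrBr mulr_sumr.
rewrite [X in _ = _ + X](eq_bigr (fun j => 'X_[m - U_(i) *+ p] * (A j i *: 'X_j))).
  by rewrite subrK.
by move=> j _; rewrite -scalerAr /mnm_reduce mpolyXD.
Qed.

Section Reduction.
Variable Q : K -> Prop.
Hypotheses (Qsemi : subsemiring Q) (QA : forall i j, Q (A i j)).

Lemma R_polyD (q1 q2 : {mpoly K[n]}) : R_poly Q q1 -> R_poly Q q2 -> R_poly Q (q1 + q2).
Proof. by case: Qsemi => _ _ QD _ Qq1 Qq2 m; rewrite mcoeffD; apply: QD. Qed.

Lemma R_polyZ c (q : {mpoly K[n]}) : Q c -> R_poly Q q -> R_poly Q (c *: q).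
Proof. by case: Qsemi => _ _ _ QM Qc Qq m; rewrite mcoeffZ; apply: QM. Qed.

Lemma R_polyX (m : 'X_{1..n}) : R_poly Q 'X_[m].
Proof. by case: Qsemi => Q0 Q1 _ _ m'; rewrite mcoeffX; case: eqP. Qed.

Definition rel_reducible (q : {mpoly K[n]}) :=
  exists2 g : 'I_n -> {mpoly K[n]}, (forall i, R_poly Q (g i)) &
  exists2 c : 'I_N -> K, (forall k, Q (c k)) &
    q = \sum_i g i * rel_poly p A i + \sum_k c k *: 'X_[small_mnm k].

Lemma rel_reducible0 : rel_reducible 0.
Proof.
have [Q0 _ _ _] := Qsemi.
exists (fun=> 0) => [i m|]; first by rewrite mcoeff0.
exists (fun=> 0) => //.
by rewrite !big1 ?addr0 // => ? _; rewrite ?mul0r ?scale0r.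
Qed.

Lemma rel_reducibleD q1 q2 :
  rel_reducible q1 -> rel_reducible q2 -> rel_reducible (q1 + q2).
Proof.
have [_ _ QD _] := Qsemi.
move=> [g1 Qg1 [c1 Qc1 ->]] [g2 Qg2 [c2 Qc2 ->]].
exists (fun i => g1 i + g2 i) => [i|]; first exact: R_polyD.
exists (fun k => c1 k + c2 k) => [k|]; first exact: QD.
rewrite addrACA -!big_split /=.
by congr (_ + _); apply: eq_bigr => ? _; rewrite (mulrDl, scalerDl).
Qed.

Lemma rel_reducibleZ c q : Q c -> rel_reducible q -> rel_reducible (c *: q).
Proof.
have [_ _ _ QM] := Qsemi.
move=> Qc [g Qg [d Qd ->]].
exists (fun i => c *: g i) => [i|]; first exact: R_polyZ.
exists (fun k => c * d k) => [k|]; first exact: QM.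
rewrite scalerDr !scaler_sumr.
by congr (_ + _); apply: eq_bigr => ? _; rewrite (scalerAl, scalerA).
Qed.

Lemma rel_reducible_sum (I : Type) (r : seq I) (P : pred I) (F : I -> {mpoly K[n]}) :
  (forall i, P i -> rel_reducible (F i)) -> rel_reducible (\sum_(i <- r | P i) F i).
Proof.
move=> redF; elim/big_ind: _ => //; [exact: rel_reducible0 | exact: rel_reducibleD].
Qed.

Lemma rel_reducibleX m : rel_reducible 'X_[m].
Proof.
have [Q0 Q1 _ _] := Qsemi.
elim/(@small_mnm_ind p n p_gt1): m => [k | m i pm IHm].
  exists (fun=> 0) => [i m|]; first by rewrite mcoeff0.
  exists (fun l => (l == k)%:R) => [l|]; first by case: eqP.
  rewrite big1 ?add0r => [|i _]; last by rewrite mul0r.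
  rewrite (bigD1 k) //= eqxx scale1r big1 ?addr0 // => l /negbTE ->.
  by rewrite scale0r.
rewrite (mpolyX_reduce pm); apply: rel_reducibleD; last first.
  by apply: rel_reducible_sum => j _; apply: rel_reducibleZ.
exists (fun j => if j == i then 'X_[m - U_(i) *+ p] else 0) => [j|].
  by case: eqP => _ //; [exact: R_polyX | move=> m'; rewrite mcoeff0].
exists (fun=> 0) => //.
rewrite [X in _ = _ + X]big1 ?addr0 => [|k _]; last by rewrite scale0r.
rewrite (bigD1 i) //= eqxx big1 ?addr0 // => j /negbTE ->.
by rewrite mul0r.
Qed.

Lemma rel_reducibleP q : R_poly Q q -> rel_reducible q.
Proof.
move=> Qq; rewrite (mpolyE q); apply: rel_reducible_sum => m _.
exact: rel_reducibleZ (Qq m) (rel_reducibleX m).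
Qed.

Section Evaluation.
Variables (S : comAlgType K) (s : 'I_n -> S).
Hypothesis s_pow : forall i, s i ^+ p = \sum_j A j i *: s j.

Definition eval_mpoly (q : {mpoly K[n]}) : S := mmap (in_alg S) s q.
HB.instance Definition _ := GRing.RMorphism.copy eval_mpoly (mmap (in_alg S) s).

Lemma eval_mpolyX m : eval_mpoly 'X_[m] = mmap1 s m.
Proof. exact: mmapX. Qed.

Lemma eval_mpolyZ c q : eval_mpoly (c *: q) = c *: eval_mpoly q.
Proof. by rewrite /eval_mpoly mmapZ /= mulr_algl. Qed.

Lemma eval_rel_poly i : eval_mpoly (rel_poly p A i) = 0.
Proof.
rewrite /rel_poly rmorphB rmorphXn rmorph_sum /= eval_mpolyX mmap1U s_pow.
apply/eqP; rewrite subr_eq0; apply/eqP/eq_bigr => j _.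
by rewrite eval_mpolyZ eval_mpolyX mmap1U.
Qed.

Lemma mmap1_reduce (m : 'X_{1..n}) i : (p <= m i)%N ->
  mmap1 s m = \sum_j A j i *: mmap1 s (mnm_reduce p m i j).
Proof.
move=> pm; rewrite -eval_mpolyX (mpolyX_reduce pm) rmorphD rmorphM /= eval_rel_poly mulr0.
by rewrite add0r rmorph_sum /=; apply: eq_bigr => j _; rewrite eval_mpolyZ eval_mpolyX.
Qed.

Lemma eval_mpoly_reduced (g : 'I_n -> {mpoly K[n]}) (c : 'I_N -> K) :
  eval_mpoly (\sum_i g i * rel_poly p A i + \sum_k c k *: 'X_[small_mnm k])
  = \sum_k c k *: mmap1 s (small_mnm k).
Proof.
rewrite rmorphD !rmorph_sum /= big1 ?add0r => [|i _]; last first.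
  by rewrite rmorphM /= eval_rel_poly mulr0.
by apply: eq_bigr => k _; rewrite eval_mpolyZ eval_mpolyX.
Qed.

Lemma eval_small_span q : R_poly Q q ->
  exists2 c : 'I_N -> K, (forall k, Q (c k))
    & eval_mpoly q = \sum_k c k *: mmap1 s (small_mnm k).
Proof.
by move=> /rel_reducibleP[g _ [c Qc ->]]; exists c => //; rewrite eval_mpoly_reduced.
Qed.

Lemma eval_mpoly_kernel q :
  (forall c : 'I_N -> K, \sum_k c k *: mmap1 s (small_mnm k) = 0 -> forall k, c k = 0) ->
  R_poly Q q -> eval_mpoly q = 0 ->
  exists g : 'I_n -> {mpoly K[n]},
    (forall i, R_poly Q (g i)) /\ q = \sum_i g i * rel_poly p A i.
Proof.
move=> small_free /rel_reducibleP[g Qg [c _ qE]] q0; exists g; split=> //.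
have c0 : forall k, c k = 0 by apply: small_free; rewrite -(eval_mpoly_reduced g) -qE.
by rewrite qE [X in _ + X]big1 ?addr0 // => k _; rewrite c0 scale0r.
Qed.

End Evaluation.
End Reduction.
End Relations.

Section LinearMaps.
Variables (K : fieldType) (U V : lmodType K) (f : U -> V).
Hypothesis f_lin : linear f.

Lemma lin0 : f 0 = 0.
Proof.
have := f_lin 1 0 0; rewrite /= !scale1r addr0 => /esym/eqP.
by rewrite -subr_eq0 addrK => /eqP.
Qed.

Lemma linD x y : f (x + y) = f x + f y.
Proof. by have := f_lin 1 x y; rewrite /= !scale1r. Qed.

Lemma linZ a x : f (a *: x) = a *: f x.
Proof. by rewrite -[a *: x]addr0 f_lin lin0 addr0. Qed.

Lemma lin_sum (I : Type) (r : seq I) (P : pred I) (F : I -> U) :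
  f (\sum_(i <- r | P i) F i) = \sum_(i <- r | P i) f (F i).
Proof. exact: (big_morph f linD lin0). Qed.

End LinearMaps.

Section Tensors.
Variables (K : fieldType) (H : falgType K).
Local Notation d := (\dim {:H}).
Implicit Types (x y z : H) (M N : 'M[K]_d).

Lemma hbas_coord x : x = \sum_i coord (vbasis {:H}) i x *: hbas i.
Proof.
by rewrite {1}(coord_vbasis (memvf x)); apply: eq_bigr => i _; rewrite /hbas (tnth_nth 0).
Qed.

Lemma tens_linl z : linear (fun x : H => tens x z).
Proof. by move=> a x y; apply/matrixP => i j; rewrite !mxE linearP /= mulrDl mulrA. Qed.

Lemma tens_linr z : linear (@tens K H z).
Proof. by move=> a x y; apply/matrixP => i j; rewrite !mxE linearP /= mulrDr mulrCA. Qed.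

Definition tlift (V : lmodType K) (Phi : H -> H -> V) M : V :=
  \sum_a \sum_b M a b *: Phi (hbas a) (hbas b).

Lemma tlift_lin (V : lmodType K) (Phi : H -> H -> V) : linear (tlift Phi).
Proof.
move=> c M N; rewrite /tlift scaler_sumr -big_split; apply: eq_bigr => a _.
rewrite scaler_sumr -big_split; apply: eq_bigr => b _.
by rewrite !mxE scalerDl scalerA.
Qed.

Lemma tlift_linPhi (V : lmodType K) (c : K) (Phi Psi : H -> H -> V) M :
  tlift (fun u v => c *: Phi u v + Psi u v) M = c *: tlift Phi M + tlift Psi M.
Proof.
rewrite /tlift scaler_sumr -big_split; apply: eq_bigr => a _.
rewrite scaler_sumr -big_split; apply: eq_bigr => b _.
by rewrite scalerDr !scalerA mulrC.
Qed.

Lemma eq_tlift (V : lmodType K) (Phi Psi : H -> H -> V) M :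
  (forall u v, Phi u v = Psi u v) -> tlift Phi M = tlift Psi M.
Proof. by move=> PhiE; apply: eq_bigr => a _; apply: eq_bigr => b _; rewrite PhiE. Qed.

Lemma tlift_tens (V : lmodType K) (Phi : H -> H -> V) x y :
  (forall z, linear (Phi ^~ z)) -> (forall z, linear (Phi z)) ->
  tlift Phi (tens x y) = Phi x y.
Proof.
move=> Phil Phir; rewrite [in RHS](hbas_coord x) (lin_sum (Phil y)).
apply: eq_bigr => a _; rewrite (linZ (Phil y)) [in RHS](hbas_coord y).
rewrite (lin_sum (Phir _)) scaler_sumr; apply: eq_bigr => b _.
by rewrite mxE (linZ (Phir _)) scalerA.
Qed.

Lemma tmul_tlift M N :
  tmul M N = tlift (fun u v => tlift (fun u' v' => tens (u * u') (v * v')) N) M.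
Proof.
rewrite /tmul /tlift; apply: eq_bigr => i _; apply: eq_bigr => j _.
rewrite scaler_sumr; apply: eq_bigr => k _.
by rewrite scaler_sumr; apply: eq_bigr => l _; rewrite scalerA.
Qed.

Lemma tmul_linl N : linear (fun M => tmul M N).
Proof. by move=> c M1 M2; rewrite !tmul_tlift tlift_lin. Qed.

Lemma tmul_linr M : linear (tmul M).
Proof.
move=> c N1 N2; rewrite !tmul_tlift -tlift_linPhi; apply: eq_tlift => u v.
exact: tlift_lin.
Qed.

Lemma tmul_tens x y u v : tmul (tens x y) (tens u v) = tens (x * u) (y * v).
Proof.
have inner_l w w' z : linear (fun u' => tens (w * u') (w' * z)).
  by move=> a u1 u2; rewrite mulrDr -scalerAr tens_linl.
have inner_r w w' z : linear (fun v' => tens (w * z) (w' * v')).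
  by move=> a v1 v2; rewrite mulrDr -scalerAr tens_linr.
rewrite tmul_tlift tlift_tens ?tlift_tens // => z a w w' /=.
  by rewrite -tlift_linPhi; apply: eq_tlift => u' v'; rewrite mulrDl -scalerAl tens_linl.
by rewrite -tlift_linPhi; apply: eq_tlift => u' v'; rewrite mulrDl -scalerAl tens_linr.
Qed.

Definition tspan (P : H -> Prop) M := exists2 r : seq (H * H),
  (forall yz, yz \in r -> P yz.1 /\ P yz.2) & M = \sum_(yz <- r) tens yz.1 yz.2.

Lemma tspan_tens (P : H -> Prop) y z : P y -> P z -> tspan P (tens y z).
Proof.
by move=> Py Pz; exists [:: (y, z)]; [move=> yz; rewrite inE => /eqP -> | rewrite big_seq1].
Qed.

Lemma tspanD (P : H -> Prop) M N : tspan P M -> tspan P N -> tspan P (M + N).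
Proof.
move=> [r Pr ->] [r' Pr' ->]; exists (r ++ r'); last by rewrite big_cat.
by move=> yz; rewrite mem_cat => /orP[/Pr | /Pr'].
Qed.

Lemma tspanZ (P : H -> Prop) a M :
  (forall y, P y -> P (a *: y)) -> tspan P M -> tspan P (a *: M).
Proof.
move=> PZ [r Pr ->]; exists [seq (a *: yz.1, yz.2) | yz <- r].
  by move=> _ /mapP[yz /Pr[Py Pz] ->]; split => //; apply: PZ.
by rewrite big_map scaler_sumr; apply: eq_bigr => yz _; rewrite (linZ (tens_linl _)).
Qed.

Lemma tspan_tmul (P : H -> Prop) M N :
  (forall y z, P y -> P z -> P (y * z)) -> tspan P M -> tspan P N -> tspan P (tmul M N).
Proof.
move=> PM [r Pr ->] [r' Pr' ->].
exists [seq (yz.1 * yz'.1, yz.2 * yz'.2) | yz <- r, yz' <- r'].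
  by move=> _ /allpairsP[[yz yz'] /= [/Pr[? ?] /Pr'[? ?] ->]]; split; apply: PM.
rewrite big_allpairs_dep (lin_sum (tmul_linl _)); apply: eq_bigr => yz _.
by rewrite (lin_sum (tmul_linr _)); apply: eq_bigr => yz' _; rewrite tmul_tens.
Qed.

Lemma tspan_ord (P : H -> Prop) M : tspan P M ->
  exists m (y z : 'I_m -> H),
    (forall i, P (y i) /\ P (z i)) /\ M = \sum_i tens (y i) (z i).
Proof.
move=> [r Pr ->]; exists (size r), (fun i => (nth 0 r i).1), (fun i => (nth 0 r i).2).
by split=> [i | ]; [apply/Pr/mem_nth | rewrite (big_nth 0) big_mkord].
Qed.

End Tensors.

Section CocommutativeHopf.
Variables (K : fieldType) (H : falgType K) (D : hopf_data H).
Hypothesis hopf : is_cc_hopf D.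
Local Notation d := (\dim {:H}).
Implicit Types x y z : H.

Local Ltac hopf_axiom :=
  case: hopf => ? [? [? [? [? [? [? [? [? [? [? [? [? ?]]]]]]]]]]]];
  match goal with ax : _ |- _ => solve [exact: ax | apply: ax] end.

Lemma mulHC x y : x * y = y * x. Proof. hopf_axiom. Qed.
Lemma comul_lin : linear (comul D). Proof. hopf_axiom. Qed.
Lemma counit_lin : linear (counit D : H -> K^o).
Proof. by case: hopf => _ [_ [counitP _]] a x y; rewrite counitP. Qed.
Lemma antipode_lin : linear (antipode D). Proof. hopf_axiom. Qed.
Lemma comul1 : comul D 1 = tens 1 1. Proof. hopf_axiom. Qed.
Lemma comulM x y : comul D (x * y) = tmul (comul D x) (comul D y). Proof. hopf_axiom. Qed.
Lemma counit1 : counit D 1 = 1. Proof. hopf_axiom. Qed.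
Lemma counitM x y : counit D (x * y) = counit D x * counit D y. Proof. hopf_axiom. Qed.

Lemma coassoc x i j k :
  \sum_a comul D x a k * comul D (hbas a) i j = \sum_b comul D x i b * comul D (hbas b) j k.
Proof. hopf_axiom. Qed.

Lemma counit_l x : \sum_a \sum_b (comul D x a b * counit D (hbas a)) *: hbas b = x.
Proof. hopf_axiom. Qed.

Lemma counit_r x : \sum_a \sum_b (comul D x a b * counit D (hbas b)) *: hbas a = x.
Proof. hopf_axiom. Qed.

Lemma antipode_r x :
  \sum_a \sum_b comul D x a b *: (hbas a * antipode D (hbas b)) = counit D x *: 1.
Proof. hopf_axiom. Qed.

Lemma primitive_sum (I : Type) (r : seq I) (P : pred I) (c : I -> K) (F : I -> H) :
  (forall i, P i -> primitive D (F i)) -> primitive D (\sum_(i <- r | P i) c i *: F i).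
Proof.
move=> primF; elim/big_rec: _ => [|i x Pi primx].
  by rewrite /primitive (lin0 comul_lin) (lin0 (tens_linl _)) (lin0 (tens_linr _)) addr0.
rewrite /primitive comul_lin primx (primF _ Pi) tens_linl tens_linr.
by rewrite scalerDr addrACA.
Qed.

Lemma counit_primitive x : primitive D x -> counit D x = 0.
Proof.
move=> primx; have : tlift (fun u v => counit D v *: u) (comul D x) = x.
  rewrite -[RHS]counit_r; apply: eq_bigr => a _; apply: eq_bigr => b _.
  by rewrite scalerA.
rewrite primx.
have Phil z : linear (fun u => counit D z *: u).
  by move=> a u v; rewrite scalerDr !scalerA mulrC.
have Phir z : linear (fun v => counit D v *: z).
  by move=> a u v; rewrite counit_lin scalerDl scalerA.
rewrite (linD (tlift_lin _)) !tlift_tens // counit1 scale1r => /eqP.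
by rewrite addrC -subr_eq0 addrK scaler_eq0 oner_eq0 orbF => /eqP.
Qed.

Lemma coassoc_tlift (V : lmodType K) (W : 'I_d -> 'I_d -> 'I_d -> V) x :
  \sum_a \sum_b comul D x a b *: \sum_i \sum_j comul D (hbas b) i j *: W a i j
  = \sum_b \sum_j comul D x b j *: \sum_a \sum_i comul D (hbas b) a i *: W a i j.
Proof.
have sum4_swap (F : 'I_d -> 'I_d -> 'I_d -> 'I_d -> V) :
    \sum_a \sum_b \sum_i \sum_j F a b i j = \sum_a \sum_i \sum_j \sum_b F a b i j.
  by apply: eq_bigr => a _; rewrite exchange_big; apply: eq_bigr => i _; rewrite exchange_big.
transitivity (\sum_a \sum_i \sum_j
                (\sum_b comul D x a b * comul D (hbas b) i j) *: W a i j).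
  under [RHS]eq_bigr => a _ do under eq_bigr => i _ do under eq_bigr => j _ do
    rewrite scaler_suml.
  rewrite -sum4_swap; apply: eq_bigr => a _; apply: eq_bigr => b _.
  rewrite scaler_sumr; apply: eq_bigr => i _; rewrite scaler_sumr.
  by apply: eq_bigr => j _; rewrite scalerA.
under eq_bigr => a _ do under eq_bigr => i _ do under eq_bigr => j _ do
  rewrite -coassoc scaler_suml.
rewrite -sum4_swap exchange_big /=; apply: eq_bigr => b _.
under eq_bigr => a _ do rewrite exchange_big /=.
rewrite exchange_big /=; apply: eq_bigr => j _; rewrite scaler_sumr.
apply: eq_bigr => a _; rewrite scaler_sumr; apply: eq_bigr => i _.
by rewrite scalerA.
Qed.

(* T = T * (id * S) = (T * id) * S = (eta o eps) * S = S, in coordinates. *)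
Lemma antipode_unique (T : H -> H) : linear T ->
  (forall z, tlift (fun u v => T u * v) (comul D z) = counit D z *: 1) ->
  forall x, T x = antipode D x.
Proof.
move=> T_lin Tconv x.
set W := fun a i j => T (hbas a) * (hbas i * antipode D (hbas j)).
have Tx : T x = \sum_a \sum_b comul D x a b *: \sum_i \sum_j comul D (hbas b) i j *: W a i j.
  rewrite -{1}(counit_r x) (lin_sum T_lin); apply: eq_bigr => a _.
  rewrite (lin_sum T_lin); apply: eq_bigr => b _.
  rewrite (linZ T_lin) -scalerA; congr (_ *: _).
  rewrite -[T _]mulr1 scalerAr -antipode_r mulr_sumr; apply: eq_bigr => i _.
  by rewrite mulr_sumr; apply: eq_bigr => j _; rewrite -scalerAr.
rewrite Tx coassoc_tlift -{2}(counit_l x) (lin_sum antipode_lin).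
apply: eq_bigr => b _; rewrite (lin_sum antipode_lin); apply: eq_bigr => j _.
rewrite (linZ antipode_lin) -scalerA; congr (_ *: _).
rewrite -[antipode D _]mul1r scalerAl -Tconv /tlift mulr_suml; apply: eq_bigr => a _.
by rewrite mulr_suml; apply: eq_bigr => i _; rewrite -scalerAl -mulrA.
Qed.

Lemma tlift_conv_tmul (T : H -> H) M N : linear T -> {morph T : x y / x * y} ->
  tlift (fun u v => T u * v) (tmul M N)
  = tlift (fun u v => T u * v) M * tlift (fun u v => T u * v) N.
Proof.
move=> T_lin T_mul; set Phi := fun u v => T u * v.
have Phil z : linear (Phi ^~ z) by move=> a u v; rewrite /Phi T_lin mulrDl -scalerAl.
have Phir z : linear (Phi z) by move=> a u v; rewrite /Phi mulrDr -scalerAr.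
rewrite tmul_tlift [tlift _ M]/tlift [tlift Phi M]/tlift (lin_sum (tlift_lin _)) mulr_suml.
apply: eq_bigr => a _.
rewrite (lin_sum (tlift_lin _)) mulr_suml; apply: eq_bigr => b _.
rewrite (linZ (tlift_lin _)) -scalerAl; congr (_ *: _).
rewrite [tlift _ N]/tlift [tlift Phi N]/tlift (lin_sum (tlift_lin _)) mulr_sumr.
apply: eq_bigr => k _.
rewrite (lin_sum (tlift_lin _)) mulr_sumr; apply: eq_bigr => l _.
rewrite (linZ (tlift_lin _)) -scalerAr tlift_tens //; congr (_ *: _).
by rewrite /Phi /= T_mul -!mulrA; congr (_ * _); rewrite mulrA (mulHC (T _)) -mulrA.
Qed.

End CocommutativeHopf.

Section GeneratedSubalgebra.
Variables (K : fieldType) (H : falgType K) (R : K -> Prop) (n : nat) (s : 'I_n -> H).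

Lemma Rgen_gen i : Rgen R s (s i).
Proof. by move=> P Ps. Qed.

Lemma Rgen1 : Rgen R s 1.
Proof. by move=> P _ P1. Qed.

Lemma RgenD x y : Rgen R s x -> Rgen R s y -> Rgen R s (x + y).
Proof. by move=> Rx Ry P Ps P1 PD PZ PM; apply: (PD); [exact: Rx | exact: Ry]. Qed.

Lemma RgenZ r x : R r -> Rgen R s x -> Rgen R s (r *: x).
Proof. by move=> Rr Rx P Ps P1 PD PZ PM; apply: (PZ) Rr _; exact: Rx. Qed.

Lemma RgenM x y : Rgen R s x -> Rgen R s y -> Rgen R s (x * y).
Proof. by move=> Rx Ry P Ps P1 PD PZ PM; apply: (PM); [exact: Rx | exact: Ry]. Qed.

Lemma Rgen0 : R 0 -> Rgen R s 0.
Proof. by move=> R0; rewrite -(scale0r 1); apply: RgenZ R0 Rgen1. Qed.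

Lemma Rgen_sum (I : Type) (r : seq I) (P : pred I) (F : I -> H) :
  R 0 -> (forall i, P i -> Rgen R s (F i)) -> Rgen R s (\sum_(i <- r | P i) F i).
Proof. by move=> R0 RF; elim/big_ind: _ => //; [exact: Rgen0 | exact: RgenD]. Qed.

Lemma Rgen_mmap1 m : Rgen R s (mmap1 s m).
Proof.
rewrite /mmap1; elim/big_ind: _ => [|x y|i _]; [exact: Rgen1 | exact: RgenM |].
elim: (m i) => [|k IHk]; rewrite ?expr0 ?exprS; first exact: Rgen1.
exact: RgenM (Rgen_gen i) IHk.
Qed.

Lemma Rgen_sub n' (s' : 'I_n' -> H) :
  (forall i, Rgen R s (s' i)) -> forall x, Rgen R s' x -> Rgen R s x.
Proof.
move=> s's x; apply; [exact: s's | exact: Rgen1 | exact: RgenD | exact: RgenZ | exact: RgenM].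
Qed.

End GeneratedSubalgebra.

Section HopfOrder.
Variables (p : nat) (K : fieldType) (R : K -> Prop) (n : nat)
  (H : falgType K) (D : hopf_data H) (t : 'I_n -> H) (B : 'M[K]_n).
Hypotheses (p_prime : prime p) (pcharK : p \in [pchar K]) (dvr : is_dvr R)
  (hopf : is_cc_hopf D) (dimH : \dim {:H} = (p ^ n)%N) (pgen : prim_generated D)
  (tbasis : prim_basis D t) (t_pow : forall i, t i ^+ p = \sum_j B j i *: t j).
Local Notation N := #|{ffun 'I_n -> 'I_p}|.

Let p_gt1 : (1 < p)%N := prime_gt1 p_prime.

(* H with its commutative ring structure, making polynomial evaluation a ring morphism. *)
Definition Hcom : Type := H.
HB.instance Definition _ := Falgebra.on Hcom.
HB.instance Definition _ := GRing.PzRing_hasCommutativeMul.Build Hcom (mulHC hopf).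

Lemma expp_sum (I : Type) (r : seq I) (P : pred I) (F : I -> H) :
  (\sum_(i <- r | P i) F i) ^+ p = \sum_(i <- r | P i) F i ^+ p.
Proof.
have pcharH : p \in [pchar H] by rewrite (pchar_lalg H).
apply: (big_morph (fun x : H => x ^+ p)) => [x y|].
  by rewrite -!(pFrobenius_autE pcharH); exact: pFrobenius_autD_comm (mulHC hopf x y).
by rewrite expr0n eqn0Ngt prime_gt0.
Qed.

Lemma theta_emb_mulmx (T M : 'M[K]_n) i :
  theta_emb t (T *m M) i = \sum_j M j i *: theta_emb t T j.
Proof.
rewrite /theta_emb; under [RHS]eq_bigr => j _ do rewrite scaler_sumr.
rewrite exchange_big; apply: eq_bigr => k _; rewrite mxE scaler_suml.
by apply: eq_bigr => j _; rewrite scalerA mulrC.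
Qed.

Lemma t_in_theta_emb (Th : 'M[K]_n) j : Th \in unitmx ->
  t j = \sum_k invmx Th k j *: theta_emb t Th k.
Proof.
move=> Thu; rewrite -theta_emb_mulmx mulmxV // /theta_emb (bigD1 j) //= mxE eqxx scale1r.
by rewrite big1 ?addr0 // => k /negbTE kj; rewrite mxE kj scale0r.
Qed.

Lemma theta_emb_pow (A Th : 'M[K]_n) : Th *m A = B *m frob_mx p Th ->
  forall i, theta_emb t Th i ^+ p = \sum_j A j i *: theta_emb t Th j.
Proof.
move=> ThA i; rewrite -theta_emb_mulmx ThA theta_emb_mulmx /theta_emb expp_sum.
by apply: eq_bigr => j _; rewrite exprZn t_pow mxE.
Qed.

Lemma theta_emb_primitive (Th : 'M[K]_n) i : primitive D (theta_emb t Th i).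
Proof. by have [tprim _ _] := tbasis; apply: (primitive_sum hopf) => j _; exact: tprim. Qed.

Lemma Rgen_mulmx (T M : 'M[K]_n) : (forall i j, R (M i j)) ->
  forall x, Rgen R (theta_emb t (T *m M)) x -> Rgen R (theta_emb t T) x.
Proof.
move=> RM; apply: Rgen_sub => i; rewrite theta_emb_mulmx.
by apply: Rgen_sum (dvr0 dvr) _ => j _; apply: RgenZ (RM j i) _; apply: Rgen_gen.
Qed.

Lemma sign_mnm_reduce (m : 'X_{1..n}) i j : (p <= m i)%N ->
  (-1 : K) ^+ mdeg (mnm_reduce p m i j) = (-1) ^+ mdeg m.
Proof.
have signp : (-1 : K) ^+ p = -1.
  by rewrite -(pFrobenius_autE pcharK) pFrobenius_autN pFrobenius_autE expr1n.
move=> pm; rewrite -{2}(mnm_reduceK pm) /mnm_reduce !mdegD mdegMn !mdeg1 mul1n.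
by rewrite !exprD signp expr1.
Qed.

Section ThetaOrder.
Variables (A Th : 'M[K]_n).
Hypotheses (AR : forall i j, R (A i j)) (Thu : Th \in unitmx)
  (ThA : Th *m A = B *m frob_mx p Th).

Let s : 'I_n -> Hcom := theta_emb t Th.
Let s_pow : forall i, s i ^+ p = \sum_j A j i *: s j := theta_emb_pow ThA.
Let Rsemi : subsemiring R := dvr_subsemiring dvr.

Lemma eval_theta_surj (x : Hcom) : exists q, x = eval_mpoly s q.
Proof.
apply: (pgen (P := fun x => exists q, x = eval_mpoly s q)).
- have [_ _ tspan] := tbasis; move=> _ /tspan[c ->].
  exists (\sum_i c i *: \sum_k invmx Th k i *: 'X_k); rewrite rmorph_sum /=.
  apply: eq_bigr => i _; rewrite eval_mpolyZ (t_in_theta_emb _ Thu) rmorph_sum /=.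
  by congr (_ *: _); apply: eq_bigr => k _; rewrite eval_mpolyZ eval_mpolyX mmap1U.
- by exists 1; rewrite rmorph1.
- by move=> _ _ [q1 ->] [q2 ->]; exists (q1 + q2); rewrite rmorphD.
- by move=> a _ [q ->]; exists (a *: q); rewrite eval_mpolyZ.
- by move=> _ _ [q1 ->] [q2 ->]; exists (q1 * q2); rewrite rmorphM.
Qed.

Definition small_basis : N.-tuple Hcom := mktuple (fun k => mmap1 s (small_mnm k)).

Lemma small_basisE (k : 'I_N) : small_basis`_k = mmap1 s (small_mnm k).
Proof. exact: nth_mktuple. Qed.

Lemma small_basis_basis : basis_of fullv small_basis.
Proof.
rewrite basisEdim size_tuple; apply/andP; split; last first.
  by rewrite [X in (X <= _)%N]card_small_mnm -dimH.
apply/subvP => x _; have [q ->] := eval_theta_surj x.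
have Tsemi : subsemiring (fun _ : K => True) by [].
have [c _ ->] := eval_small_span p_gt1 Tsemi (fun _ _ => I) s_pow (q := q) (fun _ => I).
by apply: memv_suml => k _; apply/memvZ/memv_span; rewrite -small_basisE mem_nth ?size_tuple.
Qed.

Let small_basis_free := basis_free small_basis_basis.

Lemma small_free (c : 'I_N -> K) :
  \sum_k c k *: mmap1 s (small_mnm k) = 0 -> forall k, c k = 0.
Proof.
move=> c0; apply/(freeP small_basis_free); rewrite -[RHS]c0.
by apply: eq_bigr => k _; rewrite small_basisE.
Qed.

Lemma small_basis_coord (x : Hcom) :
  x = \sum_k coord small_basis k x *: mmap1 s (small_mnm k).
Proof.
rewrite {1}(coord_basis small_basis_basis (memvf x)).
by apply: eq_bigr => k _; rewrite small_basisE.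
Qed.

Lemma coord_small_comb (c : 'I_N -> K) k :
  coord small_basis k (\sum_l c l *: mmap1 s (small_mnm l)) = c k.
Proof.
rewrite -(coord_sum_free c k small_basis_free); congr (coord _ _ _).
by apply: eq_bigr => l _; rewrite small_basisE.
Qed.

Lemma coord_small_mmap1 k (m : 'X_{1..n}) : (forall i, m i < p)%N ->
  coord small_basis k (mmap1 s m) = (m == small_mnm k)%:R.
Proof.
move=> /small_mnmP[l ->]; rewrite -small_basisE coord_free //.
by rewrite (inj_eq (@small_mnm_inj p n)).
Qed.

Lemma Rgen_eval x : Rgen R s x -> exists2 q, R_poly R q & x = eval_mpoly s q.
Proof.
have [R0 R1 _ _] := Rsemi.
move=> Rx; apply: (Rx (fun x => exists2 q, R_poly R q & x = eval_mpoly s q)).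
- by move=> i; exists 'X_i; [exact: R_polyX | rewrite eval_mpolyX mmap1U].
- by exists 1; [move=> m; rewrite mcoeff1; case: eqP | rewrite rmorph1].
- move=> _ _ [q1 Rq1 ->] [q2 Rq2 ->]; exists (q1 + q2); last by rewrite rmorphD.
  exact: R_polyD.
- by move=> r _ Rr [q Rq ->]; exists (r *: q); [exact: R_polyZ | rewrite eval_mpolyZ].
- move=> _ _ [q1 Rq1 ->] [q2 Rq2 ->]; exists (q1 * q2); last by rewrite rmorphM.
  by move=> m; rewrite mcoeffM; apply: (dvr_sum dvr) => k _; apply: (dvrM dvr).
Qed.

Lemma Rgen_coordP x : Rgen R s x <-> forall k, R (coord small_basis k x).
Proof.
split=> [/Rgen_eval[q Rq ->] k | Rx].
  by have [c Rc ->] := eval_small_span p_gt1 Rsemi AR s_pow Rq; rewrite coord_small_comb.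
rewrite (small_basis_coord x); apply: Rgen_sum (dvr0 dvr) _ => k _.
by apply: RgenZ (Rx k) _; apply: Rgen_mmap1.
Qed.

(* The algebra automorphism s_i |-> -s_i, which turns out to be the antipode. *)
Definition sign_aut (x : Hcom) : Hcom :=
  \sum_k ((-1) ^+ mdeg (small_mnm k) * coord small_basis k x) *: mmap1 s (small_mnm k).

Lemma sign_aut_lin : linear sign_aut.
Proof.
move=> a x y; rewrite /sign_aut scaler_sumr -big_split; apply: eq_bigr => k _ /=.
by rewrite linearP mulrDr scalerDl mulrCA scalerA.
Qed.

Lemma sign_aut_mmap1 m : sign_aut (mmap1 s m) = (-1) ^+ mdeg m *: mmap1 s m.
Proof.
elim/(@small_mnm_ind p n p_gt1): m => [k | m i pm IHm].
  rewrite /sign_aut (bigD1 k) //= big1 ?addr0 => [|l /negbTE lk].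
    by rewrite coord_small_mmap1 ?eqxx ?mulr1 // => i; rewrite mnmE.
  rewrite coord_small_mmap1 => [|i]; last by rewrite mnmE.
  by rewrite (inj_eq (@small_mnm_inj p n)) eq_sym lk mulr0 scale0r.
rewrite (mmap1_reduce s_pow pm) (lin_sum sign_aut_lin) scaler_sumr.
apply: eq_bigr => j _; rewrite (linZ sign_aut_lin) IHm sign_mnm_reduce //.
by rewrite !scalerA mulrC.
Qed.

Lemma sign_autM x y : sign_aut (x * y) = sign_aut x * sign_aut y.
Proof.
have mmap1D m m' : mmap1 s (m + m') = mmap1 s m * mmap1 s m'.
  by apply: commr_mmap1_M => i z; apply: mulrC.
rewrite [x]small_basis_coord [y]small_basis_coord mulr_suml !(lin_sum sign_aut_lin) mulr_suml.
apply: eq_bigr => k _; rewrite mulr_sumr (lin_sum sign_aut_lin) mulr_sumr.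
apply: eq_bigr => l _; rewrite -scalerAl -scalerAr -mmap1D !(linZ sign_aut_lin).
rewrite !sign_aut_mmap1 mmap1D mdegD exprD -!scalerAl -!scalerAr !scalerA.
by congr (_ *: _); rewrite mulrACA mulrC.
Qed.

Lemma sign_aut1 : sign_aut 1 = 1.
Proof. by rewrite -(mmap11 s) sign_aut_mmap1 mdeg0 expr0 scale1r. Qed.

Lemma sign_aut_primitive x : primitive D x -> sign_aut x = - x.
Proof.
have [_ _ tspan] := tbasis; move=> /tspan[c ->].
rewrite (lin_sum sign_aut_lin) -sumrN; apply: eq_bigr => i _.
rewrite (linZ sign_aut_lin) -scalerN (t_in_theta_emb _ Thu) (lin_sum sign_aut_lin) -sumrN.
congr (_ *: _); apply: eq_bigr => k _; rewrite (linZ sign_aut_lin) -scalerN.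
by have := sign_aut_mmap1 U_(k); rewrite mmap1U mdeg1 expr1 scaleN1r => ->.
Qed.

Lemma sign_aut_conv z :
  tlift (fun u v : H => (sign_aut u : H) * v) (comul D z) = counit D z *: 1.
Proof.
have Phil w : linear (fun u : H => (sign_aut u : H) * w).
  by move=> a u v; rewrite sign_aut_lin mulrDl -scalerAl.
have Phir w : linear (fun v : H => (sign_aut w : H) * v).
  by move=> a u v; rewrite mulrDr -scalerAr.
apply: (pgen (P := fun z =>
  tlift (fun u v : H => (sign_aut u : H) * v) (comul D z) = counit D z *: 1)).
- move=> x primx; rewrite primx (linD (tlift_lin _)) !tlift_tens //.
  rewrite sign_aut_primitive // sign_aut1 mulr1 mul1r addNr.
  by rewrite (counit_primitive hopf) ?scale0r.
- by rewrite (comul1 hopf) tlift_tens // sign_aut1 mulr1 (counit1 hopf) scale1r.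
- move=> x y Ex Ey; rewrite (linD (comul_lin hopf)) (linD (tlift_lin _)) Ex Ey.
  by rewrite (linD (counit_lin hopf)) scalerDl.
- move=> a x Ex; rewrite (linZ (comul_lin hopf)) (linZ (tlift_lin _)) Ex.
  by rewrite (linZ (counit_lin hopf)) scalerA.
- move=> x y Ex Ey.
  rewrite (comulM hopf) (tlift_conv_tmul hopf _ _ sign_aut_lin sign_autM) Ex Ey.
  by rewrite (counitM hopf) -scalerAl mul1r scalerA.
Qed.

Lemma antipode_sign_aut x : antipode D x = sign_aut x.
Proof. by rewrite (antipode_unique hopf (T := sign_aut) sign_aut_lin sign_aut_conv x). Qed.

Lemma Rgen_comul x : Rgen R s x -> tspan (Rgen R s) (comul D x).
Proof.
move=> Rx; apply: (Rx (fun x => tspan (Rgen R s) (comul D x))).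
- move=> i; rewrite (theta_emb_primitive Th i).
  by apply: tspanD; apply: tspan_tens; first [exact: Rgen_gen | exact: Rgen1].
- by rewrite (comul1 hopf); apply: tspan_tens; exact: Rgen1.
- by move=> y z Ty Tz; rewrite (linD (comul_lin hopf)); apply: tspanD.
- move=> r y Rr Ty; rewrite (linZ (comul_lin hopf)).
  by apply: tspanZ Ty => w; exact: RgenZ.
- move=> y z Ty Tz; rewrite (comulM hopf).
  by apply: tspan_tmul Ty Tz => u v; exact: RgenM.
Qed.

Lemma Rgen_counit x : Rgen R s x -> R (counit D x).
Proof.
move=> Rx; apply: (Rx (fun x => R (counit D x))).
- by move=> i; rewrite (counit_primitive hopf (theta_emb_primitive Th i)); exact: dvr0 dvr.
- by rewrite (counit1 hopf); exact: dvr1 dvr.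
- by move=> y z Ry Rz; rewrite (linD (counit_lin hopf)); apply: (dvrD dvr).
- by move=> r y Rr Ry; rewrite (linZ (counit_lin hopf)); apply: (dvrM dvr).
- by move=> y z Ry Rz; rewrite (counitM hopf); apply: (dvrM dvr).
Qed.

Lemma Rgen_antipode x : Rgen R s x -> Rgen R s (antipode D x).
Proof.
rewrite antipode_sign_aut !Rgen_coordP => Rx k; rewrite coord_small_comb.
by apply: (dvrM dvr) (Rx k); apply/(dvrX dvr)/(dvrN1 dvr).
Qed.

Lemma Rgen_coef (M : 'I_n -> K) : Rgen R s (\sum_j M j *: s j) -> forall j, R (M j).
Proof.
move=> /Rgen_coordP RM j.
have U_small (l i : 'I_n) : (U_(l)%MM i < p)%N.
  by rewrite mnm1E; case: eqP => _; [exact: p_gt1 | exact: prime_gt0].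
have [k kE] := small_mnmP (U_small j).
have := RM k; rewrite linear_sum (bigD1 j) //= big1 ?addr0 => [|l lj].
  by rewrite linearZ /= -(mmap1U s) coord_small_mmap1 // -kE eqxx mulr1.
by rewrite linearZ /= -(mmap1U s) coord_small_mmap1 // -kE eq_mnm1 (negbTE lj) mulr0.
Qed.

Lemma theta_hopf_order : hopf_order R D (Rgen R (theta_emb t Th)).
Proof.
have sbE := small_basisE; have R0 := dvr0 dvr.
split; first by split; [exact: Rgen0 | exact: RgenD | exact: RgenZ].
split.
  exists N, (fun k => small_basis`_k), (fun x => \row_k coord small_basis k x).
  split=> [k | x /Rgen_coordP Rx k | x y _ _ | r x _ _ | x _].
  - by rewrite sbE; apply: Rgen_mmap1.
  - by rewrite mxE.
  - by apply/rowP => k; rewrite !mxE linearD.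
  - by apply/rowP => k; rewrite !mxE linearZ.
  - by under eq_bigr do rewrite mxE; apply: (coord_basis small_basis_basis (memvf x)).
split.
  move=> x; exists N, (fun k => coord small_basis k x), (fun k => small_basis`_k).
  split=> [k|]; first by rewrite sbE; apply: Rgen_mmap1.
  exact: (coord_basis small_basis_basis (memvf x)).
split; first exact: Rgen1.
split; first exact: RgenM.
split; first by move=> x /Rgen_comul; apply: tspan_ord.
by split; [exact: Rgen_counit | exact: Rgen_antipode].
Qed.

Lemma theta_kernel q : R_poly R q -> eval_at (theta_emb t Th) q = 0 ->
  exists g : 'I_n -> {mpoly K[n]},
    (forall i, R_poly R (g i)) /\ q = \sum_i g i * rel_poly p A i.
Proof. exact: (eval_mpoly_kernel p_gt1 Rsemi AR s_pow small_free). Qed.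

End ThetaOrder.

Lemma Rgen_theta_eq (A Th A' Th' : 'M[K]_n) :
  (forall i j, R (A i j)) -> Th \in unitmx -> Th *m A = B *m frob_mx p Th ->
  (forall i j, R (A' i j)) -> Th' \in unitmx -> Th' *m A' = B *m frob_mx p Th' ->
  (forall x, Rgen R (theta_emb t Th) x <-> Rgen R (theta_emb t Th') x)
    <-> in_GLR R (invmx Th *m Th').
Proof.
move=> AR Thu ThA A'R Th'u Th'A'; set M := invmx Th *m Th'.
have Mu : M \in unitmx by rewrite unitmx_mul unitmx_inv Thu Th'u.
have Th'E : Th' = Th *m M by rewrite mulmxA mulmxV ?mul1mx.
have ThE : Th = Th' *m invmx M by rewrite Th'E -mulmxA mulmxV ?mulmx1.
split=> [sameRgen | [_ RM RiM] x]; last first.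
  by split; [rewrite {1}ThE; apply: Rgen_mulmx | rewrite {1}Th'E; apply: Rgen_mulmx].
split=> // j i.
  apply: (Rgen_coef AR Thu ThA (M := fun j => M j i)).
  have /sameRgen := @Rgen_gen _ _ R _ (theta_emb t Th') i.
  by rewrite {1}Th'E theta_emb_mulmx.
apply: (Rgen_coef A'R Th'u Th'A' (M := fun j => invmx M j i)).
have /sameRgen := @Rgen_gen _ _ R _ (theta_emb t Th) i.
by rewrite {1}ThE theta_emb_mulmx.
Qed.

End HopfOrder.

Unset Implicit Arguments.
Theorem theorem4p2 (p : nat) (K : fieldType) (R : K -> Prop) (n : nat)
    (H : falgType K) (D : hopf_data H) (t : 'I_n -> H) (B : 'M[K]_n) :
  prime p -> p \in [pchar K] -> is_dvr R ->
  is_cc_hopf D -> \dim {:H} = (p ^ n)%N -> prim_generated D ->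
  prim_basis D t ->
  (forall i, t i ^+ p = \sum_j B j i *: t j) ->
  (forall i j, R (B i j)) ->
  (forall (A Th : 'M[K]_n),
     (forall i j, R (A i j)) -> Th \in unitmx ->
     Th *m A = B *m frob_mx p Th ->
     [/\ (* u_i |-> s_i respects the defining relations of H_0 ... *)
         (forall i, theta_emb t Th i ^+ p = \sum_j A j i *: theta_emb t Th j),
         (* ... and the induced map R[u]/(relations) -> H is injective *)
         (forall q : {mpoly K[n]}, R_poly R q -> eval_at (theta_emb t Th) q = 0 ->
            exists g : 'I_n -> {mpoly K[n]},
              (forall i, R_poly R (g i)) /\ q = \sum_i g i * rel_poly p A i),
         (* it is a Hopf map: the images s_i of the primitive u_i are primitive *)
         (forall i, primitive D (theta_emb t Th i))
       & (* its image R[s_1..s_n] is an R-Hopf order in H *)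
         hopf_order R D (Rgen R (theta_emb t Th))]) /\
  (forall (A Th A' Th' : 'M[K]_n),
     (forall i j, R (A i j)) -> Th \in unitmx -> Th *m A = B *m frob_mx p Th ->
     (forall i j, R (A' i j)) -> Th' \in unitmx -> Th' *m A' = B *m frob_mx p Th' ->
     ((forall x, Rgen R (theta_emb t Th) x <-> Rgen R (theta_emb t Th') x)
        <-> in_GLR R (invmx Th *m Th'))).
Proof.
move=> p_prime pcharK dvr hopf dimH pgen tbasis t_pow _.
have Rgen_eq := Rgen_theta_eq p_prime pcharK dvr hopf dimH pgen tbasis t_pow.
split=> // A Th AR Thu ThA; split.
- exact: theta_emb_pow p_prime pcharK hopf t_pow _ _ ThA.
- exact: theta_kernel p_prime pcharK dvr hopf dimH pgen tbasis t_pow _ _ AR Thu ThA.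
- exact: theta_emb_primitive hopf tbasis Th.
- exact: theta_hopf_order p_prime pcharK dvr hopf dimH pgen tbasis t_pow _ _ AR Thu ThA.
Qed.
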